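(* For all real $x,y$, $$e^{xy}=\sum_{m,n=0}^{\infty}(-1)^n H_{m,n}(x)\frac{y^{m+n}}{m!\,n!}.$$
   Context: For integers $m,n\ge 0$, the two-index Hermite polynomial is $H_{m,n}(x)=\left(-\frac{d}{dx}+2x\right)^m(x^n)$, i.e. the operator $f\mapsto -f'+2xf$ applied $m$ times to $x^n$. *)

From Stdlib Require Import Reals List.
Open Scope R_scope.

(* Real polynomials as coefficient lists, lowest degree first:
   [a0; a1; ...; ak] represents a0 + a1 x + ... + ak x^k. *)
Fixpoint peval (p : list R) (x : R) : R :=
  match p with
  | nil => 0
  | a :: q => a + x * peval q x
  end.

Fixpoint padd (p q : list R) : list R :=
  match p, q with
  | nil, _ => q
  | _, nil => p
  | a :: p', b :: q' => (a + b) :: padd p' q'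
  end.

Definition pscale (c : R) (p : list R) : list R := map (fun a => c * a) p.

Definition pmulX (p : list R) : list R := 0 :: p.

Fixpoint pderiv_aux (k : nat) (p : list R) : list R :=
  match p with
  | nil => nil
  | a :: q => (INR k * a) :: pderiv_aux (S k) q
  end.
Definition pderiv (p : list R) : list R :=
  match p with
  | nil => nil
  | _ :: q => pderiv_aux 1 q
  end.

Definition pmonomial (n : nat) : list R := repeat 0 n ++ (1 :: nil).

Definition Hop (p : list R) : list R :=
  padd (pscale (-1) (pderiv p)) (pscale 2 (pmulX p)).

Definition Hpoly (m n : nat) : list R := Nat.iter m Hop (pmonomial n).
Definition H (m n : nat) (x : R) : R := peval (Hpoly m n) x.

(* The commutation relation [-d/dx + 2x, x] = -1
   gives H_{m,n+1} = x H_{m,n} - m H_{m-1,n}, hence by induction on n the expansion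
     H_{m,n} = sum_k C(m,k) (-1)^k n(n-1)...(n-k+1) x^(n-k) h_{m-k}(x),
   where h_j = H_{j,0} are the Hermite polynomials, h_{j+1} = 2x h_j - 2j h_{j-1}.
   In row m, the n-sum of each falling-factorial term is (-1)^k y^k e^(-xy), so the
   row sums to e^(-xy) c_m, with c the Cauchy product of y^(2k)/k! and h_j y^j/j!.
   The generating function sum_j h_j y^j / j! = e^(2xy - y^2) holds absolutely,
   because its terms and those of the Cauchy product of e^(-y^2) (spread to even
   indices) with e^(2xy) obey the same two-step recurrence.  Mertens' theorem then
   gives sum_m c_m = e^(y^2) e^(2xy - y^2), and the double sum is e^(xy). *)

From Stdlib Require Import Reals Factorial Lia FunctionalExtensionality.
From Coquelicot Require Import Coquelicot.
Open Scope R_scope.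

(** * Evaluation of coefficient lists *)

Lemma peval_padd p q t : peval (padd p q) t = peval p t + peval q t.
Proof.
  revert q; induction p as [|a p IH]; intros [|b q]; simpl; try ring.
  rewrite IH; ring.
Qed.

Lemma peval_pscale c p t : peval (pscale c p) t = c * peval p t.
Proof.
  induction p as [|a p IH]; simpl; [ring|].
  unfold pscale in *; simpl; rewrite IH; ring.
Qed.

Lemma peval_pmulX p t : peval (pmulX p) t = t * peval p t.
Proof. simpl; ring. Qed.

Lemma peval_pmonomial n t : peval (pmonomial n) t = t ^ n.
Proof.
  induction n as [|n IH]; simpl; [ring|].
  unfold pmonomial in IH; rewrite IH; ring.
Qed.

(* Raising the starting weight of [pderiv_aux] by one adds the list itself;
   this is the algebraic content of the product rule for [a + t q(t)]. *)
Lemma peval_pderiv_aux_S p : forall k t,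
  peval (pderiv_aux (S k) p) t = peval (pderiv_aux k p) t + peval p t.
Proof.
  induction p as [|a p IH]; intros k t; cbn [peval pderiv_aux]; [ring|].
  rewrite IH, (S_INR k); ring.
Qed.

Lemma peval_pderiv_aux_0 p t : peval (pderiv_aux 0 p) t = t * peval (pderiv p) t.
Proof. destruct p; simpl; ring. Qed.

Lemma pderiv_correct p t : derivable_pt_lim (peval p) t (peval (pderiv p) t).
Proof.
  induction p as [|a p IH]; simpl.
  - apply (derivable_pt_lim_const 0 t).
  - rewrite peval_pderiv_aux_S, peval_pderiv_aux_0.
    pose proof (derivable_pt_lim_plus _ _ _ _ _ (derivable_pt_lim_const a t)
                  (derivable_pt_lim_mult _ _ _ _ _ (derivable_pt_lim_id t) IH)) as D.
    unfold plus_fct, mult_fct, fct_cte, id in D.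
    replace (t * peval (pderiv p) t + peval p t)
      with (0 + (1 * peval p t + t * peval (pderiv p) t)) by ring.
    exact D.
Qed.

Lemma peval_pderiv_unique p f t l :
  (forall s, peval p s = f s) -> derivable_pt_lim f t l -> peval (pderiv p) t = l.
Proof.
  intros Hf Hl. apply (uniqueness_limite (peval p) t); [apply pderiv_correct|].
  replace (peval p) with f by (symmetry; apply functional_extensionality; exact Hf).
  exact Hl.
Qed.

Definition peq p q := forall t, peval p t = peval q t.

Lemma pderiv_peq p q : peq p q -> peq (pderiv p) (pderiv q).
Proof. intros E t. apply (peval_pderiv_unique p (peval q)); [exact E|apply pderiv_correct]. Qed.

Lemma peval_pderiv_padd p q t :
  peval (pderiv (padd p q)) t = peval (pderiv p) t + peval (pderiv q) t.
Proof.
  apply (peval_pderiv_unique _ (plus_fct (peval p) (peval q))).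
  - intro s; apply peval_padd.
  - apply derivable_pt_lim_plus; apply pderiv_correct.
Qed.

Lemma peval_pderiv_pscale c p t : peval (pderiv (pscale c p)) t = c * peval (pderiv p) t.
Proof.
  apply (peval_pderiv_unique _ (mult_real_fct c (peval p))).
  - intro s; apply peval_pscale.
  - apply derivable_pt_lim_scal, pderiv_correct.
Qed.

Lemma peval_pderiv_pmulX p t :
  peval (pderiv (pmulX p)) t = t * peval (pderiv p) t + peval p t.
Proof. unfold pmulX, pderiv at 1. rewrite peval_pderiv_aux_S, peval_pderiv_aux_0. ring. Qed.

(** * The operator [Hop] = -d/dx + 2x and the polynomials H_{m,n} *)

Lemma peval_Hop p t : peval (Hop p) t = - peval (pderiv p) t + 2 * (t * peval p t).
Proof. unfold Hop. rewrite peval_padd, !peval_pscale, peval_pmulX. ring. Qed.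

Lemma Hop_peq p q : peq p q -> peq (Hop p) (Hop q).
Proof. intros E t. rewrite !peval_Hop, (pderiv_peq p q E), E. ring. Qed.

Lemma Hop_padd p q : peq (Hop (padd p q)) (padd (Hop p) (Hop q)).
Proof. intro t. rewrite peval_padd, !peval_Hop, peval_pderiv_padd, peval_padd. ring. Qed.

Lemma Hop_pscale c p : peq (Hop (pscale c p)) (pscale c (Hop p)).
Proof. intro t. rewrite peval_pscale, !peval_Hop, peval_pderiv_pscale, peval_pscale. ring. Qed.

Lemma Hop_pmulX p : peq (Hop (pmulX p)) (padd (pmulX (Hop p)) (pscale (-1) p)).
Proof.
  intro t.
  rewrite peval_padd, peval_pscale, peval_pmulX, !peval_Hop, peval_pderiv_pmulX, peval_pmulX.
  ring.
Qed.

Lemma iter_Hop_pscale m c p :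
  peq (Nat.iter m Hop (pscale c p)) (pscale c (Nat.iter m Hop p)).
Proof.
  induction m as [|m IH]; intro t; simpl; [reflexivity|].
  rewrite (Hop_peq _ _ IH t). apply Hop_pscale.
Qed.

Lemma iter_Hop_pmulX m p : peq (Nat.iter m Hop (pmulX p))
  (padd (pmulX (Nat.iter m Hop p)) (pscale (- INR m) (Nat.iter (pred m) Hop p))).
Proof.
  induction m as [|m IH]; intro t.
  - simpl Nat.iter. rewrite peval_padd, peval_pscale, !peval_pmulX. simpl INR. ring.
  - rewrite Nat.iter_succ, (Hop_peq _ _ IH t), Hop_padd, peval_padd, Hop_pscale,
      peval_pscale, Hop_pmulX, peval_padd, peval_pscale, peval_padd, peval_pscale,
      !peval_pmulX.
    destruct m as [|m]; simpl pred; simpl Nat.iter.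
    + simpl INR. ring.
    + rewrite (S_INR (S m)), (S_INR m). ring.
Qed.

Lemma H_0_l n t : H 0 n t = t ^ n.
Proof. apply peval_pmonomial. Qed.

Lemma H_succ_r m n t : H m (S n) t = t * H m n t - INR m * H (pred m) n t.
Proof.
  unfold H, Hpoly. change (pmonomial (S n)) with (pmulX (pmonomial n)).
  rewrite iter_Hop_pmulX, peval_padd, peval_pmulX, peval_pscale. ring.
Qed.

Definition hermite (m : nat) (t : R) : R := H m 0 t.

Lemma hermite_succ m t :
  hermite (S m) t = 2 * t * hermite m t - 2 * INR m * hermite (pred m) t.
Proof.
  unfold hermite, H, Hpoly. rewrite Nat.iter_succ_r.
  change (Hop (pmonomial 0)) with (pscale 2 (pmulX (pmonomial 0))).
  rewrite iter_Hop_pscale, peval_pscale, iter_Hop_pmulX, peval_padd, peval_pmulX, peval_pscale.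
  ring.
Qed.

(** * Falling factorials and the binomial expansion of H_{m,n} *)

Fixpoint falling (n k : nat) : R :=
  match k with
  | O => 1
  | S k' => INR n * falling (pred n) k'
  end.

Lemma falling_succ_r n k : falling n (S k) = falling n k * (INR n - INR k).
Proof.
  revert n; induction k as [|k IH]; intro n; [simpl; ring|].
  change (falling n (S (S k))) with (INR n * falling (pred n) (S k)).
  rewrite IH. destruct n as [|n].
  - change (falling 0 (S k)) with (INR 0 * falling 0 k). change (INR 0) with 0. ring.
  - change (falling (S n) (S k)) with (INR (S n) * falling n k).
    change (pred (S n)) with n. rewrite !S_INR. ring.
Qed.

(* The Pascal-type rule coming from (d/dt)^{k+1} (t * t^n). *)
Lemma falling_pascal n k :
  falling (S n) (S k) = falling n (S k) + INR (S k) * falling n k.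
Proof.
  change (falling (S n) (S k)) with (INR (S n) * falling n k).
  rewrite falling_succ_r, !S_INR. ring.
Qed.

(* falling(n,k) = 0 when k > n, because the factor n - n occurs. *)
Lemma falling_gt n k : (n < k)%nat -> falling n k = 0.
Proof.
  induction k as [|k IH]; intro Hk; [lia|].
  rewrite falling_succ_r.
  destruct (Nat.eq_dec n k) as [->|Hne]; [ring|].
  rewrite IH by lia. ring.
Qed.

Lemma falling_fact k j : falling (k + j) k * INR (fact j) = INR (fact (k + j)).
Proof.
  induction k as [|k IH]; simpl falling; [simpl; ring|].
  change (pred (S k + j)) with (k + j)%nat.
  rewrite Rmult_assoc, IH. change (fact (S k + j)) with (S (k + j) * fact (k + j))%nat.
  rewrite mult_INR. reflexivity.
Qed.

(* Needed when peeling one factor x off x^(n-k): either n > k, or the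
   falling factorial vanishes. *)
Lemma falling_pow_shift n k t :
  falling n (S k) * t ^ (n - k) = t * (falling n (S k) * t ^ (n - S k)).
Proof.
  destruct (Compare_dec.le_lt_dec (S k) n) as [L|L].
  - replace (n - k)%nat with (S (n - S k)) by lia. simpl. ring.
  - rewrite falling_gt by lia. ring.
Qed.

Lemma binomial_absorb m k :
  Binomial.C (S m) (S k) * INR (S k) = INR (S m) * Binomial.C m k.
Proof.
  unfold Binomial.C. change (S m - S k)%nat with (m - k)%nat.
  rewrite !fact_simpl, !mult_INR.
  pose proof (INR_fact_neq_0 k). pose proof (INR_fact_neq_0 (m - k)).
  pose proof (not_0_INR (S k) ltac:(lia)).
  field. auto.
Qed.

Lemma sum_f_R0_lincomb a b (A B : nat -> R) N :
  sum_f_R0 (fun i => a * A i + b * B i) N = a * sum_f_R0 A N + b * sum_f_R0 B N.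
Proof. induction N as [|N IH]; simpl; [|rewrite IH]; ring. Qed.

Lemma sum_f_R0_head (A : nat -> R) N :
  (forall i, (1 <= i)%nat -> A i = 0) -> sum_f_R0 A N = A 0%nat.
Proof.
  intro Z; induction N as [|N IH]; [reflexivity|].
  rewrite tech5, IH, (Z (S N)) by lia. ring.
Qed.

Lemma H_expansion x n : forall m, H m n x =
  sum_f_R0 (fun k => Binomial.C m k * (-1) ^ k * falling n k * x ^ (n - k)
                     * hermite (m - k) x) m.
Proof.
  induction n as [|n IH]; intro m.
  - rewrite sum_f_R0_head.
    + rewrite C_n_0, !Nat.sub_0_r. unfold hermite. simpl. ring.
    + intros i Hi. rewrite (falling_gt 0 i) by lia. ring.
  - rewrite H_succ_r. destruct m as [|m].
    + rewrite IH. simpl. rewrite !Nat.sub_0_r. ring.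
    + simpl pred. rewrite (IH (S m)), (IH m), !(decomp_sum _ (S m)) by lia. simpl pred.
      assert (Hterm : forall i,
        Binomial.C (S m) (S i) * (-1) ^ S i * falling (S n) (S i) * x ^ (S n - S i)
          * hermite (S m - S i) x
        = x * (Binomial.C (S m) (S i) * (-1) ^ S i * falling n (S i) * x ^ (n - S i)
                 * hermite (S m - S i) x)
          + - INR (S m) * (Binomial.C m i * (-1) ^ i * falling n i * x ^ (n - i)
                           * hermite (m - i) x)).
      { intro i. change (S n - S i)%nat with (n - i)%nat.
        change (S m - S i)%nat with (m - i)%nat.
        rewrite falling_pascal.
        transitivity (Binomial.C (S m) (S i) * (-1) ^ S i * hermite (m - i) x
             * (falling n (S i) * x ^ (n - i))
           + Binomial.C (S m) (S i) * INR (S i)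
             * ((-1) ^ S i * falling n i * x ^ (n - i) * hermite (m - i) x)); [ring|].
        rewrite falling_pow_shift, binomial_absorb. simpl pow. ring. }
      rewrite (sum_eq _ _ m (fun i _ => Hterm i)), sum_f_R0_lincomb.
      rewrite C_n_0, !Nat.sub_0_r. simpl pow. simpl falling. ring.
Qed.

(** * Series toolkit *)

Definition exp_term (z : R) (k : nat) : R := z ^ k / INR (fact k).

Lemma exp_term_succ z k : INR (S k) * exp_term z (S k) = z * exp_term z k.
Proof.
  unfold exp_term. rewrite fact_simpl, mult_INR. simpl pow.
  pose proof (INR_fact_neq_0 k). pose proof (not_0_INR (S k) ltac:(lia)).
  field. auto.
Qed.

Lemma exp_series z : is_series (exp_term z) (exp z).
Proof.
  eapply is_series_ext; [|exact (is_exp_Reals z)].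
  intro n. unfold exp_term. simpl. rewrite pow_n_pow. reflexivity.
Qed.

Lemma exp_series_abs z : ex_series (fun n => Rabs (exp_term z n)).
Proof.
  exists (exp (Rabs z)). eapply is_series_ext; [|apply exp_series].
  intro n. unfold exp_term, Rdiv. rewrite Rabs_mult, <- RPow_abs, Rabs_inv.
  rewrite (Rabs_right (INR (fact n))) by (apply Rle_ge, pos_INR). reflexivity.
Qed.

Lemma is_series_from k (a : nat -> R) (l : R) : (forall n, (n < k)%nat -> a n = 0) ->
  is_series (fun j => a (k + j)%nat) l -> is_series a l.
Proof.
  intros Z Hs. destruct k as [|k]; [exact Hs|].
  apply (is_series_decr_n a (S k) l); [lia|].
  rewrite sum_n_Reals. simpl pred.
  rewrite sum_eq_R0 by (intros n Hn; apply Z; lia).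
  match goal with |- is_series _ ?L => replace L with l end; [exact Hs|].
  change (l = l + - 0). ring.
Qed.

Lemma is_series_finite_sum N (F : nat -> nat -> R) (l : nat -> R) :
  (forall k, (k <= N)%nat -> is_series (F k) (l k)) ->
  is_series (fun n => sum_f_R0 (fun k => F k n) N) (sum_f_R0 l N).
Proof.
  induction N as [|N IH]; intro HF; simpl; [apply HF; lia|].
  apply (is_series_plus (fun n => sum_f_R0 (fun k => F k n) N) (F (S N))).
  - apply IH; intros; apply HF; lia.
  - apply HF; lia.
Qed.

Definition cauchy (a b : nat -> R) (n : nat) : R :=
  sum_f_R0 (fun k => a k * b (n - k)%nat) n.

Lemma cauchy_series (a b : nat -> R) (la lb : R) :
  is_series a la -> is_series b lb ->
  ex_series (fun n => Rabs (a n)) -> ex_series (fun n => Rabs (b n)) ->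
  is_series (cauchy a b) (la * lb) /\ ex_series (fun n => Rabs (cauchy a b n)).
Proof.
  intros Ha Hb [La HLa] [Lb HLb]. split; [exact (is_series_mult a b la lb Ha Hb
    (ex_intro _ La HLa) (ex_intro _ Lb HLb))|].
  assert (abs_abs : forall c : nat -> R, forall L, is_series (fun n => Rabs (c n)) L ->
            ex_series (fun n => Rabs (Rabs (c n)))).
  { intros c L Hc. exists L. eapply is_series_ext; [|exact Hc].
    intro; rewrite Rabs_Rabsolu; reflexivity. }
  apply (@ex_series_le R_AbsRing R_CompleteNormedModule _ (cauchy (fun n => Rabs (a n)) (fun n => Rabs (b n)))).
  - intro n. change (norm (Rabs (cauchy a b n))) with (Rabs (Rabs (cauchy a b n))).
    rewrite Rabs_Rabsolu. unfold cauchy.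
    eapply Rle_trans; [apply sum_f_R0_triangle|].
    right. apply sum_eq. intros; apply Rabs_mult.
  - eexists. apply is_series_mult; [exact HLa|exact HLb|exact (abs_abs a La HLa)|exact (abs_abs b Lb HLb)].
Qed.

(* The sequence u_0, 0, u_1, 0, u_2, ...: the coefficients of sum_i u_i z^(2i)
   as a power series in z. *)
Definition even_spread (u : nat -> R) (l : nat) : R :=
  if Nat.even l then u (Nat.div2 l) else 0.

Lemma even_spread_double u k : even_spread u (2 * k) = u k.
Proof. unfold even_spread. rewrite Nat.even_even, Nat.div2_double. reflexivity. Qed.

Lemma even_spread_double_S u k : even_spread u (S (2 * k)) = 0.
Proof. unfold even_spread. rewrite <- Nat.add_1_r, Nat.even_odd. reflexivity. Qed.

Lemma Rabs_even_spread u l : Rabs (even_spread u l) = even_spread (fun i => Rabs (u i)) l.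
Proof. unfold even_spread. destruct (Nat.even l); [reflexivity|apply Rabs_R0]. Qed.

Lemma sum_even_spread u k :
  sum_f_R0 (even_spread u) (2 * k) = sum_f_R0 u k /\
  sum_f_R0 (even_spread u) (S (2 * k)) = sum_f_R0 u k.
Proof.
  induction k as [|k [_ IH]].
  - split; [reflexivity|]. simpl. unfold even_spread; simpl. ring.
  - assert (Heven : sum_f_R0 (even_spread u) (2 * S k) = sum_f_R0 u (S k)).
    { replace (2 * S k)%nat with (S (S (2 * k))) by lia.
      rewrite tech5, IH. replace (S (S (2 * k))) with (2 * S k)%nat by lia.
      rewrite even_spread_double. reflexivity. }
    split; [exact Heven|]. rewrite tech5, Heven, even_spread_double_S. ring.
Qed.

Lemma is_series_even_spread u (l : R) : is_series u l -> is_series (even_spread u) l.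
Proof.
  intro Hu. apply is_series_Reals. apply is_series_Reals in Hu.
  intros eps Heps. destruct (Hu eps Heps) as [N HN]. exists (2 * N)%nat.
  intros n Hn. destruct (Nat.Even_or_Odd n) as [[k ->]|[k ->]].
  - rewrite (proj1 (sum_even_spread u k)). apply HN. lia.
  - rewrite Nat.add_1_r, (proj2 (sum_even_spread u k)). apply HN. lia.
Qed.

Lemma even_spread_succ u z : (forall k, INR (S k) * u (S k) = z * u k) ->
  forall l, INR (S (S l)) * even_spread u (S (S l)) = 2 * z * even_spread u l.
Proof.
  intros Hu l. destruct (Nat.Even_or_Odd l) as [[k ->]|[k ->]].
  - replace (S (S (2 * k))) with (2 * S k)%nat by lia.
    rewrite !even_spread_double, mult_INR, Rmult_assoc, Hu. simpl INR. ring.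
  - replace (S (S (2 * k + 1))) with (S (2 * S k)) by lia.
    rewrite Nat.add_1_r, !even_spread_double_S. ring.
Qed.

(** * The inner sums over n *)

(* sum_n (-1)^n n(n-1)...(n-k+1) x^(n-k) y^n / n! = (-1)^k y^k e^(-xy):
   after dropping the vanishing first k terms, this is (-1)^k y^k times the
   exponential series of -xy. *)
Lemma falling_exp_series x y k :
  is_series (fun n => (-1) ^ n * falling n k * x ^ (n - k) * y ^ n / INR (fact n))
            ((-1) ^ k * y ^ k * exp (- (x * y))).
Proof.
  apply (is_series_from k).
  - intros n Hn. rewrite falling_gt by exact Hn. unfold Rdiv. ring.
  - assert (Hterm : forall j, (-1) ^ k * y ^ k * exp_term (- (x * y)) j
      = (-1) ^ (k + j) * falling (k + j) k * x ^ (k + j - k) * y ^ (k + j)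
        / INR (fact (k + j))).
    { intro j. unfold exp_term. replace (k + j - k)%nat with j by lia.
      pose proof (INR_fact_neq_0 j). pose proof (INR_fact_neq_0 (k + j)).
      assert (Hfalling : falling (k + j) k = INR (fact (k + j)) / INR (fact j))
        by (rewrite <- falling_fact; field; auto).
      replace ((- (x * y)) ^ j) with ((-1) ^ j * x ^ j * y ^ j)
        by (rewrite <- !Rpow_mult_distr; f_equal; ring).
      rewrite Hfalling, !pow_add. field. auto. }
    exact (is_series_ext _ _ _ Hterm (is_series_scal _ _ _ (exp_series _))).
Qed.

Definition hermite_term (x y : R) (j : nat) : R := hermite j x * y ^ j / INR (fact j).

(* Each row of the double series: expanding H_{m,n} and summing over n first
   gives a finite combination of the series of [falling_exp_series]. *)
Lemma row_series x y m :
  is_series (fun n => (-1) ^ n * H m n x * y ^ (m + n) / (INR (fact m) * INR (fact n)))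
            (exp (- (x * y)) * cauchy (exp_term (y ^ 2)) (hermite_term x y) m).
Proof.
  set (A := fun k => Binomial.C m k * (-1) ^ k * hermite (m - k) x * y ^ m / INR (fact m)).
  set (B := fun k n => (-1) ^ n * falling n k * x ^ (n - k) * y ^ n / INR (fact n)).
  assert (Hterm : forall n : nat, sum_f_R0 (fun k => A k * B k n) m =
    (-1) ^ n * H m n x * y ^ (m + n) / (INR (fact m) * INR (fact n))).
  { intro n. rewrite H_expansion.
    transitivity ((-1) ^ n * y ^ (m + n) / (INR (fact m) * INR (fact n)) *
      sum_f_R0 (fun k => Binomial.C m k * (-1) ^ k * falling n k * x ^ (n - k)
                         * hermite (m - k) x) m); [|unfold Rdiv; ring].
    rewrite scal_sum. apply sum_eq. intros k _.
    unfold A, B. rewrite pow_add. pose proof (INR_fact_neq_0 m). pose proof (INR_fact_neq_0 n).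
    field. auto. }
  apply (is_series_ext _ _ _ Hterm).
  replace (exp (- (x * y)) * cauchy (exp_term (y ^ 2)) (hermite_term x y) m)
      with (sum_f_R0 (fun k => A k * ((-1) ^ k * y ^ k * exp (- (x * y)))) m).
  - apply is_series_finite_sum. intros k _.
    exact (is_series_scal (A k) _ _ (falling_exp_series x y k)).
  - unfold cauchy. rewrite scal_sum. apply sum_eq. intros k Hk.
    assert (Hpow : y ^ m * y ^ k = (y ^ 2) ^ k * y ^ (m - k)).
    { rewrite <- pow_mult, <- !pow_add. f_equal. lia. }
    assert (Hsign : (-1) ^ k * (-1) ^ k = 1).
    { rewrite <- Rpow_mult_distr, <- (pow1 k). f_equal. ring. }
    pose proof (INR_fact_neq_0 k). pose proof (INR_fact_neq_0 m).
    pose proof (INR_fact_neq_0 (m - k)).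
    transitivity (Binomial.C m k / INR (fact m) * ((-1) ^ k * (-1) ^ k) * (y ^ m * y ^ k)
                  * hermite (m - k) x * exp (- (x * y))); [unfold A; field; auto|].
    rewrite Hsign, Hpow. unfold exp_term, hermite_term, Binomial.C. field. auto.
Qed.

(** * The generating function of the Hermite polynomials *)

Lemma cauchy_two_step (a b : nat -> R) (alpha beta : R) :
  a 1%nat = 0 ->
  (forall l, INR (S (S l)) * a (S (S l)) = alpha * a l) ->
  (forall l, INR (S l) * b (S l) = beta * b l) ->
  forall j, INR (S (S j)) * cauchy a b (S (S j))
            = beta * cauchy a b (S j) + alpha * cauchy a b j.
Proof.
  intros a1 Ha Hb j. set (N := S (S j)).
  assert (Hleft : sum_f_R0 (fun l => INR l * a l * b (N - l)%nat) N = alpha * cauchy a b j).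
  { unfold N. rewrite (decomp_sum _ (S (S j))) by lia. simpl pred.
    rewrite (decomp_sum _ (S j)) by lia. simpl pred. rewrite a1. change (INR 0) with 0.
    unfold cauchy. rewrite scal_sum. rewrite <- Rplus_assoc.
    replace (0 * a 0%nat * b (S (S j) - 0)%nat + INR 1 * 0 * b (S (S j) - 1)%nat) with 0 by ring.
    rewrite Rplus_0_l. apply sum_eq. intros i _.
    change (S (S j) - S (S i))%nat with (j - i)%nat. rewrite Ha. ring. }
  assert (Hright : sum_f_R0 (fun l => a l * (INR (N - l) * b (N - l)%nat)) N
                   = beta * cauchy a b (S j)).
  { unfold N. rewrite tech5, Nat.sub_diag. change (INR 0) with 0.
    unfold cauchy. rewrite scal_sum, Rmult_0_l, Rmult_0_r, Rplus_0_r.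
    apply sum_eq. intros l Hl.
    replace (S (S j) - l)%nat with (S (S j - l)) by lia. rewrite Hb. ring. }
  unfold cauchy at 1. rewrite scal_sum.
  rewrite (sum_eq _ (fun l => INR l * a l * b (N - l)%nat
                              + a l * (INR (N - l) * b (N - l)%nat))).
  - rewrite plus_sum, Hleft, Hright. ring.
  - intros l Hl. replace (INR N) with (INR l + INR (N - l)); [ring|].
    rewrite <- plus_INR. f_equal. lia.
Qed.

Lemma two_step_unique (u v : nat -> R) (alpha beta : R) :
  (forall j, INR (S (S j)) * u (S (S j)) = beta * u (S j) + alpha * u j) ->
  (forall j, INR (S (S j)) * v (S (S j)) = beta * v (S j) + alpha * v j) ->
  u 0%nat = v 0%nat -> u 1%nat = v 1%nat -> forall j, u j = v j.
Proof.
  intros Hu Hv E0 E1.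
  assert (Hpair : forall j, u j = v j /\ u (S j) = v (S j)).
  { induction j as [|j [IH0 IH1]]; [split; assumption|]. split; [exact IH1|].
    apply (Rmult_eq_reg_l (INR (S (S j)))); [|apply not_0_INR; lia].
    rewrite Hu, Hv, IH0, IH1. reflexivity. }
  intro j. exact (proj1 (Hpair j)).
Qed.

Lemma hermite_term_two_step x y j :
  INR (S (S j)) * hermite_term x y (S (S j))
  = 2 * x * y * hermite_term x y (S j) + - (2 * y ^ 2) * hermite_term x y j.
Proof.
  unfold hermite_term. rewrite hermite_succ. simpl pred.
  rewrite (fact_simpl (S j)), (fact_simpl j), !mult_INR.
  pose proof (INR_fact_neq_0 j).
  pose proof (not_0_INR (S j) ltac:(lia)). pose proof (not_0_INR (S (S j)) ltac:(lia)).
  simpl pow. field. auto.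
Qed.

(* sum_j h_j(x) y^j / j! = e^(2xy - y^2), absolutely convergent: both sides
   are the Cauchy product of e^(-y^2) (spread to even indices) and e^(2xy),
   since they satisfy the same two-step recurrence with the same start. *)
Lemma hermite_generating x y :
  is_series (hermite_term x y) (exp (2 * x * y - y ^ 2)) /\
  ex_series (fun j => Rabs (hermite_term x y j)).
Proof.
  set (a := even_spread (exp_term (- y ^ 2))).
  set (b := exp_term (2 * x * y)).
  assert (Ha : is_series a (exp (- y ^ 2))) by apply is_series_even_spread, exp_series.
  assert (Haa : ex_series (fun n => Rabs (a n))).
  { destruct (exp_series_abs (- y ^ 2)) as [L HL]. exists L.
    eapply is_series_ext; [|exact (is_series_even_spread _ _ HL)].
    intro n. symmetry. apply Rabs_even_spread. }
  destruct (cauchy_series a b _ _ Ha (exp_series _) Haa (exp_series_abs _)) as [Hc Hca].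
  assert (h0 : hermite 0 x = 1) by (unfold hermite; apply H_0_l).
  assert (h1 : hermite 1 x = 2 * x) by (rewrite hermite_succ, h0; simpl; ring).
  assert (Heq : forall j, cauchy a b j = hermite_term x y j).
  { apply (two_step_unique _ _ (- (2 * y ^ 2)) (2 * x * y)).
    - apply cauchy_two_step.
      + reflexivity.
      + intro l. unfold a. rewrite (even_spread_succ _ (- y ^ 2)) by apply exp_term_succ. ring.
      + apply exp_term_succ.
    - apply hermite_term_two_step.
    - unfold cauchy, hermite_term. rewrite h0.
      unfold a, b, exp_term, even_spread. simpl. field.
    - unfold cauchy, hermite_term. rewrite h1.
      unfold a, b, exp_term, even_spread. simpl. field. }
  split.
  - replace (2 * x * y - y ^ 2) with (- y ^ 2 + 2 * x * y) by ring.
    rewrite exp_plus. exact (is_series_ext _ _ _ Heq Hc).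
  - exact (ex_series_ext _ _ (fun j => f_equal Rabs (Heq j)) Hca).
Qed.

(** * The double series *)

Theorem mainTheorem13 (x y : R) :
  exists a : nat -> R,
    (forall m : nat,
        infinite_sum
          (fun n : nat => (-1) ^ n * H m n x * y ^ (m + n) / (INR (fact m) * INR (fact n)))
          (a m))
    /\ infinite_sum a (exp (x * y)).
Proof.
  exists (fun m => exp (- (x * y)) * cauchy (exp_term (y ^ 2)) (hermite_term x y) m).
  split.
  - intro m. apply is_series_Reals, row_series.
  - apply is_series_Reals.
    destruct (hermite_generating x y) as [Hh Hha].
    destruct (cauchy_series _ _ _ _ (exp_series (y ^ 2)) Hh (exp_series_abs _) Hha)
      as [Hprod _].
    replace (exp (x * y)) with (exp (- (x * y)) * (exp (y ^ 2) * exp (2 * x * y - y ^ 2)))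
      by (rewrite <- !exp_plus; f_equal; ring).
    exact (is_series_scal _ _ _ Hprod).
Qed.
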